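(* For all integers $n\ge 2$ and $0\le m\le n(n-1)$, the algebraic connectivity of $\mathbb G(n,m)$ equals $\lfloor \frac{m}{n-1}\rfloor$.
   Context: For integers $n\ge2$ and $0\le m\le n(n-1)$, $\mathbb G(n,m)$ is the simple directed graph on vertex set $\{1,\dots,n\}$ whose arc set is $\{(\lceil \frac{i}{n-1}\rceil,\ n-((i-1)\bmod n)) : i=1,\dots,m\}$, where an arc $(j,k)$ goes from $j$ to $k$ and $a\bmod b\in\{0,\dots,b-1\}$ is the remainder; these $m$ pairs are pairwise distinct pairs of distinct vertices (equivalently, $\mathbb G(n,0)$ is empty and $\mathbb G(n,m)$ is obtained from $\mathbb G(n,m-1)$ by adding the arc $(\lceil \frac{m}{n-1}\rceil, n-((m-1)\bmod n))$). The (in-degree) Laplacian of a directed graph is $L=D-A$, $D$ the diagonal matrix of in-degrees, $A_{ij}=1$ if $(j,i)$ is an arc and $0$ otherwise. The algebraic connectivity is the second smallest real part among the $n$ eigenvalues of $L$ counted with algebraic multiplicity. *)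

From HB Require Import structures.
From mathcomp Require Import all_boot all_order all_algebra all_field.
Set Implicit Arguments. Unset Strict Implicit. Unset Printing Implicit Defensive.
Import Order.TTheory GRing.Theory Num.Theory.
Local Open Scope ring_scope.

Definition ceil_div (a b : nat) : nat := ((a + b - 1) %/ b)%N.

(* (j, k) (vertices numbered 1..n) is an arc of G(n,m):
   exists i in {1..m} (written i = t+1, t : 'I_m) with
   j = ceil(i/(n-1)) and k = n - ((i-1) mod n). *)
Definition Garc (n m j k : nat) : bool :=
  [exists t : 'I_m, (j == ceil_div t.+1 (n - 1)) && (k == n - (t %% n))%N].

(* adjacency matrix: A i j = 1 iff (j, i) is an arc (0-based indices shifted to 1-based vertices) *)
Definition Gadj (n m : nat) : 'M[algC]_n :=
  \matrix_(i < n, j < n) (Garc n m j.+1 i.+1)%:R.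

Definition Glap (n m : nat) : 'M[algC]_n :=
  \matrix_(i < n, j < n)
    ((i == j)%:R * (\sum_(k < n) Gadj n m i k) - Gadj n m i j).

Definition is_spectrum (n : nat) (M : 'M[algC]_n) (s : seq algC) : Prop :=
  char_poly M = \prod_(x <- s) ('X - x%:P).

Definition second_smallest_re (s : seq algC) : algC :=
  nth 0 (sort <=%R (map (fun x => 'Re x) s)) 1.

From mathcomp Require Import all_boot all_order all_algebra all_field.
From mathcomp Require Import fingroup perm zify.
Set Implicit Arguments.
Unset Strict Implicit.
Unset Printing Implicit Defensive.
Import Order.TTheory GRing.Theory Num.Theory.
Local Open Scope ring_scope.

(* With vertices numbered from 0 and q = m %/ (n - 1), the vertices 0, ..., q - 1
   send an arc to every other vertex, vertex q to m %% (n - 1) of them and the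
   remaining vertices to none.  The rows of the Laplacian L sum to 0, so
   conjugating L by the matrix whose first column is all ones zeroes its first
   column and subtracts row 0 from the other rows.  This clears every
   off-diagonal entry outside row 0 and column q, hence the eigenvalues are the
   new diagonal entries: 0, and indeg i + [i -> 0] >= q for i <> 0.  Equality
   holds for some i <> 0 because vertex q misses at least one vertex. *)

Lemma det_eq_prod_diag (R : comNzRingType) n (A : 'M[R]_n) (a : 'I_n) (c : nat) :
    (forall i, i != a -> A i a = 0) ->
    (forall i j, i != j -> A i j != 0 -> (i == a) || (j == c :> nat)) ->
  \det A = \prod_i A i i.
Proof.
move=> col_a offdiag.
rewrite /determinant (bigD1 (1%g : {perm _})) //= odd_perm1 expr0 mul1r.
under eq_bigr do rewrite perm1.
rewrite [X in _ + X]big1 ?addr0 // => s s_neq1.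
have [/forallP nz | ] := boolP [forall i, A i (s i) != 0]; last first.
  rewrite negb_forall => /existsP [i]; rewrite negbK => /eqP Ai0.
  by rewrite (bigD1 i) //= Ai0 mul0r mulr0.
have sa : s a = a.
  apply: contraTeq (nz ((s^-1)%g a)) => sa_neq; rewrite permKV negbK col_a //.
  by apply: contra sa_neq => /eqP {1}<-; rewrite permKV.
(* A moved point lies outside row [a], so it is sent into column [c]; two
   moved points [x] and [s x] would then have the same image. *)
have moved_to_c x : s x != x -> s x == c :> nat.
  move=> sx; have xa : x != a by apply: contra sx => /eqP ->; rewrite sa.
  by have := offdiag x (s x); rewrite eq_sym sx nz (negbTE xa); apply.
case/eqP: s_neq1; apply/permP => x; rewrite perm1; apply/eqP/negPn/negP => sx.
have ssx : s (s x) != s x by apply: contra sx => /eqP/perm_inj ->.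
have /eqP := moved_to_c _ ssx; rewrite -(eqP (moved_to_c _ sx)) => /val_inj/perm_inj.
by move/eqP: sx.
Qed.

Lemma char_poly_eq_prod_diag (R : comNzRingType) n (A : 'M[R]_n) (a : 'I_n) (c : nat) :
    (forall i, i != a -> A i a = 0) ->
    (forall i j, i != j -> A i j != 0 -> (i == a) || (j == c :> nat)) ->
  char_poly A = \prod_i ('X - (A i i)%:P).
Proof.
have entryE i j : char_poly_mx A i j = 'X *+ (i == j) - (A i j)%:P by rewrite !mxE.
move=> col_a offdiag; rewrite /char_poly (det_eq_prod_diag (a := a) (c := c)).
- by apply: eq_bigr => i _; rewrite entryE eqxx.
- by move=> i ia; rewrite entryE (negPf ia) col_a ?subrr.
move=> i j ij; rewrite entryE (negPf ij) sub0r oppr_eq0 polyC_eq0; exact: offdiag.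
Qed.

Lemma char_poly_intertwine (R : idomainType) n (A B P : 'M[R]_n) :
  A *m P = P *m B -> \det P != 0 -> char_poly A = char_poly B.
Proof.
move=> AP_PB detP; apply/(mulIf (_ : (\det P)%:P != 0)); first by rewrite polyC_eq0.
rewrite -[in RHS]mulrC -det_map_mx -!det_mulmx /char_poly_mx.
by rewrite mulmxBl mulmxBr -!map_mxM AP_PB scalar_mxC.
Qed.

Section Deflation.

Variables (R : comNzRingType) (n : nat).

Definition deflate (A : 'M[R]_n.+1) : 'M[R]_n.+1 :=
  \matrix_(i, j) if j == ord0 then 0
                 else if i == ord0 then A ord0 j else A i j - A ord0 j.

Definition deflate_basis : 'M[R]_n.+1 := \matrix_(i, j) ((i == j) || (j == ord0))%:R.

Lemma det_deflate_basis : \det deflate_basis = 1.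
Proof.
rewrite det_trig; last first.
  apply/is_trig_mxP => i j lt_ij; rewrite mxE -!val_eqE /= (ltn_eqF lt_ij) /=.
  by case: eqP lt_ij => // ->.
by rewrite big1 // => i _; rewrite mxE eqxx.
Qed.

(* The first column of [deflate_basis] is the all-ones vector, which [A] kills. *)
Lemma mul_deflate_basis (A : 'M[R]_n.+1) : (forall i, \sum_j A i j = 0) ->
  A *m deflate_basis = deflate_basis *m deflate A.
Proof.
move=> rowsum0; apply/matrixP => i j; rewrite !mxE.
under eq_bigr do rewrite mxE.
under [RHS]eq_bigr do rewrite !mxE.
have [-> | j0] := eqVneq j ord0.
  rewrite [RHS]big1 => [|k _]; last by rewrite mulr0.
  by rewrite -[RHS](rowsum0 i); apply: eq_bigr => k _; rewrite orbT mulr1.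
rewrite (bigD1 j) //= eqxx mulr1 big1 ?addr0 => [|k /negPf kj]; last first.
  by rewrite kj mulr0.
have [-> | i0] := eqVneq i ord0.
  rewrite (bigD1 ord0) //= mul1r big1 ?addr0 // => k k0.
  by rewrite [ord0 == k]eq_sym (negPf k0) mul0r.
rewrite (bigD1 i) //= (bigD1 ord0) 1?eq_sym //= big1 ?addr0 => [|k /andP [ki k0]].
  by rewrite eqxx [ord0 == i]eq_sym (negPf i0) !mul1r subrK.
by rewrite eq_sym (negPf ki) (negPf k0) mul0r.
Qed.

End Deflation.

Lemma char_poly_deflate (R : idomainType) n (A : 'M[R]_n.+1) :
  (forall i, \sum_j A i j = 0) -> char_poly A = char_poly (deflate A).
Proof.
move=> rowsum0; apply: char_poly_intertwine (mul_deflate_basis rowsum0) _.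
by rewrite det_deflate_basis oner_neq0.
Qed.

Lemma nth1_sort_eq (R : numDomainType) (l : seq R) (x : R) :
    x \is Num.real -> {subset l <= Num.real} ->
    (count (fun y => (y < x)%R) l <= 1)%N -> (2 <= count (fun y => (y <= x)%R) l)%N ->
  nth 0 (sort <=%R l) 1 = x.
Proof.
move=> xR lR; rewrite -!(seq.permP (permEl (perm_sort <=%R l))).
have sR : {subset sort <=%R l <= Num.real} by move=> y; rewrite mem_sort => /lR.
have : sorted <=%R (sort <=%R l).
  apply: (@sort_sorted_in _ [pred y | y \is Num.real]); last exact/allP.
  by move=> y z yR zR; apply: real_leVge.
case: (sort _ l) sR => [|x0 [|x1 s]] sR //=; first by move=> _ _; case: (x0 <= x).
move=> /andP [le01 path1s] cnt_lt cnt_le.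
have x1R : x1 \is Num.real by rewrite sR ?inE ?eqxx ?orbT.
have x1_le_s := order_path_min le_trans path1s.
apply/eqP; rewrite eq_le; apply/andP; split.
  rewrite real_leNgt //; apply/negP => lt_x_x1.
  have count_s : count (fun y => (y <= x)%R) s = 0%N.
    apply/eqP; rewrite -leqn0 leqNgt -has_count; apply/hasPn => y /(allP x1_le_s) x1y.
    by apply/negP => yx; have := lt_le_trans lt_x_x1 (le_trans x1y yx); rewrite ltxx.
  by move: cnt_le; rewrite count_s (real_leNgt x1R xR) lt_x_x1 addn0; case: (x0 <= x).
rewrite real_leNgt //; apply/negP => lt_x1_x.
by move: cnt_lt; rewrite lt_x1_x (le_lt_trans le01 lt_x1_x).
Qed.

Lemma count_enum_card (T : finType) (p : pred T) : count p (enum T) = #|p|.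
Proof. by rewrite cardE -size_filter enumT /enum_mem; congr size; apply: eq_filter. Qed.

Lemma second_smallest_re_natr n (d : 'I_n -> nat) (a b : 'I_n) (x : nat) (s : seq algC) :
    perm_eq s [seq (d i)%:R | i <- enum 'I_n] -> b != a ->
    (d a <= x)%N -> d b = x -> (forall i, i != a -> x <= d i)%N ->
  second_smallest_re s = x%:R.
Proof.
move=> perm_s ba da db dx; have ReE k : 'Re (k%:R : algC) = k%:R by apply/Creal_ReP/realn.
apply: nth1_sort_eq.
- exact: realn.
- by move=> y /mapP [z _ ->]; apply: Creal_Re.
- rewrite count_map (seq.permP perm_s) count_map count_enum_card -(card1 a).
  apply/subset_leq_card/subsetP => i; rewrite !inE /= ReE ltr_nat.
  by apply: contraTT => /dx; rewrite -leqNgt.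
- have -> : 2%N = #|[set a; b]| by rewrite cards2 eq_sym ba.
  rewrite count_map (seq.permP perm_s) count_map count_enum_card.
  apply/subset_leq_card/subsetP => i; rewrite !inE /= ReE ler_nat.
  by case/orP => /eqP ->; rewrite ?db.
Qed.

Definition arc (n m j i : nat) : bool := Garc n m j.+1 i.+1.

Definition indeg (n m i : nat) : nat := \sum_(k < n) arc n m k i.

Section Arcs.

Local Open Scope nat_scope.

Variables n m : nat.
Hypothesis n_gt1 : 1 < n.
Local Notation q := (m %/ (n - 1)).
Local Notation r := (m %% (n - 1)).

Let n_gt0 : 0 < n := ltnW n_gt1.
Let n1_gt0 : 0 < n - 1 := etrans (subn_gt0 1 n) n_gt1.

Lemma arcE j i :
  arc n m j i = [exists t : 'I_m, (t %/ (n - 1) == j) && (i == n - 1 - t %% n)].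
Proof.
rewrite /arc /Garc /ceil_div; apply: eq_existsb => t.
have -> : t.+1 + (n - 1) - 1 = 1 * (n - 1) + t by lia.
rewrite divnMDl // add1n eqSS.
rewrite eq_sym; congr (_ && _).
by move: (ltn_pmod t n_gt0) => ?; apply/eqP/eqP; lia.
Qed.

Lemma arc_irrefl i : arc n m i i = false.
Proof.
rewrite arcE; apply/existsP => -[t /andP [/eqP ti /eqP it]].
(* [t + i + 1] is a multiple of [n], but it is [(t %% (n - 1)).+1] modulo [n]. *)
have dvd_n : n %| t + i.+1.
  have -> : t + i.+1 = (t %/ n).+1 * n.
    by rewrite mulSn it {1}(divn_eq t n); move: (ltn_pmod t n_gt0); lia.
  exact: dvdn_mull.
have mul_in : i * n = i * (n - 1) + i by rewrite -mulnSr subn1 prednK.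
have t_eq : t + i.+1 = i * n + (t %% (n - 1)).+1.
  by rewrite mul_in {1}(divn_eq t (n - 1)) ti; lia.
move: dvd_n; rewrite t_eq dvdn_addr ?dvdn_mull // => /dvdn_leq.
by move: (ltn_pmod t n1_gt0); lia.
Qed.

Lemma arc_gt j i : q < j -> arc n m j i = false.
Proof.
move=> q_lt_j; rewrite arcE; apply/existsP => -[t /andP [/eqP tj _]].
by have := leq_div2r (n - 1) (ltnW (ltn_ord t)); lia.
Qed.

Lemma arc_lt j i : i < n -> j < n -> j < q -> i != j -> arc n m j i.
Proof.
move=> lt_in lt_jn lt_jq neq_ij; rewrite arcE.
have le_m : j.+1 * (n - 1) <= m.
  by rewrite (leq_trans _ (leq_divM m (n - 1))) // leq_mul2r lt_jq orbT.
(* The arc is the one numbered [j * (n - 1) + s] with [s = j - i - 1 (mod n)]. *)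
pose s := if i < j then j - i - 1 else n + j - i - 1.
pose p := if i < j then j - 1 else j.
have lt_s : s < n - 1 by rewrite /s; case: (ltnP i j) => ?; move: neq_ij; lia.
have t_eq : j * (n - 1) + s = p * n + (n - 1 - i).
  rewrite /s /p mulnBr muln1; case: (ltnP i j) => ?.
    rewrite mulnBl mul1n.
    have : n <= j * n by rewrite leq_pmull; lia.
    have : j <= j * n by rewrite leq_pmulr; lia.
    move: (j * n); lia.
  have : j <= j * n by rewrite leq_pmulr; lia.
  move: (j * n); lia.
have lt_tm : j * (n - 1) + s < m.
  by move: le_m; rewrite mulSn; lia.
apply/existsP; exists (Ordinal lt_tm); rewrite /= divnMDl // divn_small //.
by rewrite addn0 eqxx t_eq modnMDl modn_small; [apply/eqP; lia | lia].
Qed.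

Lemma card_arc_q : #|[set i : 'I_n | arc n m q i]| <= r.
Proof.
have lt_target x : n - 1 - x < n by lia.
pose target (s : 'I_r) : 'I_n := Ordinal (lt_target ((q * (n - 1) + s) %% n)).
rewrite -[r]card_ord -cardsT; apply: leq_trans (leq_imset_card target _).
apply/subset_leq_card/subsetP => i; rewrite inE arcE => /existsP [t /andP [/eqP tq /eqP it]].
have t_eq := divn_eq t (n - 1); rewrite tq in t_eq.
have lt_tr : t %% (n - 1) < r.
  by move: (divn_eq m (n - 1)) (ltn_ord t); rewrite {1}t_eq; lia.
apply/imsetP; exists (Ordinal lt_tr); rewrite ?inE //.
by apply/val_inj; rewrite /= -t_eq -it.
Qed.

Lemma exists_not_arc_q c : exists2 i : 'I_n, i != c :> nat & ~~ arc n m q i.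
Proof.
apply/exists_inP; rewrite -negb_forall_in; apply/negP => /forall_inP all_arc.
set C := [set i : 'I_n | i == c :> nat].
have card_C : #|C| <= 1.
  by apply/card_le1_eqP => x y; rewrite !inE => /eqP xc /eqP yc; apply/val_inj; rewrite /= xc yc.
have cover : [set: 'I_n] \subset C :|: [set i : 'I_n | arc n m q i].
  by apply/subsetP => i _; rewrite !inE; case: eqP => //= /eqP /all_arc.
move/subset_leq_card: cover; rewrite cardsT card_ord.
move/leq_trans/(_ (leq_of_leqif (leq_card_setU _ _)))/leq_trans/(_ (leq_add card_C card_arc_q)).
by have := ltn_pmod m n1_gt0; lia.
Qed.

Hypothesis le_m : m <= n * (n - 1).

Lemma q_le_n : q <= n.
Proof. by rewrite -[n in _ <= n](mulnK n n1_gt0) leq_div2r. Qed.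

Lemma arc_src_lt j i : arc n m j i -> j < n.
Proof.
rewrite arcE => /existsP [t /andP [/eqP <- _]].
by rewrite ltn_divLR // (leq_trans (ltn_ord t)).
Qed.

Lemma arc_split k i : i < n -> k < n ->
  arc n m k i = ((k < q) && (k != i)) + ((k == q) && arc n m q i) :> nat.
Proof.
move=> lt_in lt_kn; case: (ltngtP k q) => [lt_kq | lt_qk | ->] /=.
- have [-> | neq_ki] := eqVneq k i; first by rewrite arc_irrefl.
  by rewrite arc_lt // eq_sym.
- by rewrite arc_gt.
- by [].
Qed.

Lemma indeg_add_arc0 (i : 'I_n) : i != 0 :> nat ->
  indeg n m i + arc n m i 0 = q + arc n m q i + ((i == q :> nat) && arc n m q 0).
Proof.
move=> i_neq0.
have sum_lt_q : \sum_(k < n) (k < q) = q.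
  rewrite -big_mkcond /= -(big_ord_widen n (fun _ => 1) q_le_n).
  by rewrite sum1_card card_ord.
have sum_lt_q_neq_i : \sum_(k < n) ((k < q) && (k != i :> nat)) + (i < q) = q.
  rewrite -{3}sum_lt_q [in RHS](bigD1 i) //= addnC (bigD1 i) //= eqxx andbF add0n.
  by congr (_ + _); apply: eq_bigr => k; rewrite -val_eqE => ->; rewrite andbT.
have sum_eq_q : \sum_(k < n) ((k == q :> nat) && arc n m q i) = arc n m q i.
  have [arc_qi | _] := boolP (arc n m q i); last by rewrite big1 // => k; rewrite andbF.
  rewrite (bigD1 (Ordinal (arc_src_lt arc_qi))) //= eqxx big1 ?addn0 // => k.
  by rewrite -val_eqE => /negPf ->.
rewrite /indeg (eq_bigr _ (fun k _ => arc_split (ltn_ord i) (ltn_ord k))) big_split /= sum_eq_q.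
rewrite (arc_split n_gt0 (ltn_ord i)) i_neq0 andbT.
by rewrite addnAC addnA sum_lt_q_neq_i addnAC.
Qed.

Lemma q_le_indeg_add_arc0 (i : 'I_n) : i != 0 :> nat -> q <= indeg n m i + arc n m i 0.
Proof. by move=> i_neq0; rewrite indeg_add_arc0 // -addnA leq_addr. Qed.

Lemma exists_indeg_add_arc0_eq : exists2 i : 'I_n, i != 0 :> nat & indeg n m i + arc n m i 0 = q.
Proof.
have [i i_neq not_arc] := exists_not_arc_q (if arc n m q 0 then q else 0).
have i_neq0 : i != 0 :> nat.
  by case: ifP i_neq => // arc_q0 _; apply: contraNneq not_arc => ->.
exists i => //; rewrite indeg_add_arc0 // (negPf not_arc) addn0.
by case: ifP i_neq => [_ /negPf -> | _ _]; rewrite ?andbF addn0.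
Qed.

End Arcs.

Lemma Glap_offdiag n m (i j : 'I_n) : i != j -> Glap n m i j = - (arc n m j i)%:R.
Proof. by move=> /negPf ij; rewrite !mxE ij mul0r sub0r. Qed.

Lemma Glap_diag n m (i : 'I_n) : (1 < n)%N -> Glap n m i i = (indeg n m i)%:R.
Proof.
move=> n_gt1; rewrite !mxE eqxx mul1r natr_sum.
rewrite [Garc _ _ _ _](arc_irrefl m n_gt1) subr0.
by apply: eq_bigr => k _; rewrite mxE.
Qed.

Lemma Glap_rowsum n m (i : 'I_n) : \sum_j Glap n m i j = 0.
Proof.
under eq_bigr do rewrite mxE.
rewrite sumrB (bigD1 i) //= eqxx mul1r [X in _ + X - _]big1 ?addr0 ?subrr // => j.
by rewrite eq_sym => /negPf ->; rewrite mul0r.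
Qed.

Section DeflatedLaplacian.

Variables N m : nat.
Hypothesis n_gt1 : (1 < N.+1)%N.
Local Notation L := (Glap N.+1 m).
Local Notation q := (m %/ (N.+1 - 1))%N.

Lemma deflate_Glap_diag (i : 'I_N.+1) : i != ord0 ->
  deflate L i i = (indeg N.+1 m i + arc N.+1 m i 0)%:R.
Proof.
move=> i0; rewrite mxE (negPf i0) Glap_diag // Glap_offdiag 1?eq_sym //.
by rewrite opprK natrD.
Qed.

(* Off the diagonal, a column [j < q] of [L] is constantly [-1] and a column
   [j > q] is [0], so subtracting row [0] clears it. *)
Lemma deflate_Glap_offdiag (i j : 'I_N.+1) :
  i != j -> i != ord0 -> j != q :> nat -> deflate L i j = 0.
Proof.
move=> ij i0 jq; rewrite mxE (negPf i0); have [//|j0] := eqVneq j ord0.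
rewrite !Glap_offdiag // 1?eq_sym //.
case: (ltngtP j q) => [lt_jq | lt_qj | eq_jq]; last by rewrite eq_jq eqxx in jq.
  by rewrite !arc_lt // 1?eq_sym ?subrr.
by rewrite !arc_gt // subrr.
Qed.

Lemma char_poly_Glap : char_poly L = \prod_i ('X - (deflate L i i)%:P).
Proof.
rewrite char_poly_deflate; last exact: Glap_rowsum.
apply: (char_poly_eq_prod_diag (a := ord0) (c := q)) => [i _ | i j ij].
  by rewrite mxE eqxx.
by apply: contraR; rewrite negb_or => /andP [i0 jq]; rewrite deflate_Glap_offdiag ?eqxx.
Qed.

End DeflatedLaplacian.

Theorem theorem4 (n m : nat) (hn : (2 <= n)%N) (hm : (m <= n * (n - 1))%N) :
  (exists s : seq algC, is_spectrum (Glap n m) s) /\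
  (forall s : seq algC, is_spectrum (Glap n m) s ->
     second_smallest_re s = ((m %/ (n - 1))%N)%:R).
Proof.
case: n hn hm => [|N] // hn hm.
pose d (i : 'I_N.+1) := if i == ord0 then 0%N else (indeg N.+1 m i + arc N.+1 m i 0)%N.
pose s0 : seq algC := [seq (d i)%:R | i <- enum 'I_N.+1].
have spec_s0 : is_spectrum (Glap N.+1 m) s0.
  rewrite /is_spectrum char_poly_Glap // big_map big_enum; apply: eq_bigr => i _.
  rewrite /d; case: eqVneq => [->|i0]; first by rewrite mxE eqxx.
  by rewrite deflate_Glap_diag.
split=> [|s spec_s]; first by exists s0.
have [w w0 dw] := exists_indeg_add_arc0_eq hn hm.
apply: (second_smallest_re_natr (a := ord0) (b := w) (d := d)).
- by apply: prod_XsubC_eq; rewrite -spec_s -spec_s0.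
- by [].
- by rewrite /d eqxx.
- by rewrite /d (negPf (w0 : w != ord0)).
by move=> i i0; rewrite /d (negPf i0) q_le_indeg_add_arc0.
Qed.
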